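(* Let $L$ be a $\kappa$-frame. Every congruence $C\in\mathbb{C}L$ is a meet of clear congruences; namely $C=\bigwedge\{\partial_I\mid I\in\mathfrak{H}_\kappa L,\ \partial_I\ge C\}$.
   Context: $\kappa$ is a fixed regular cardinal; a $\kappa$-frame is a bounded distributive lattice having joins of all subsets of cardinality $<\kappa$ and satisfying the frame distributive law for such joins. A $\kappa$-ideal is a downset in which every subset of cardinality $<\kappa$ has an upper bound; $\mathfrak{H}_\kappa L$ is the set of $\kappa$-ideals. A congruence is an equivalence relation that is a sub-$\kappa$-frame of $L\times L$; $\mathbb{C}L$ is the frame of congruences under inclusion. For a $\kappa$-ideal $I$, $\partial_I=\{(a,b)\in L\times L\mid \forall x\in L:\ a\wedge x\in I\iff b\wedge x\in I\}$; a congruence is clear if it equals $\partial_I$ for some $\kappa$-ideal $I$. *)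

Set Implicit Arguments.

(** * Cardinals below a regular cardinal kappa.
    kappa is represented by a carrier type [K]; a type [A] has cardinality
    < kappa iff it injects into K but K does not inject into A. *)

Definition injective {A B : Type} (f : A -> B) : Prop :=
  forall x y, f x = f y -> x = y.

Definition small_type (K : Type) (A : Type) : Prop :=
  (exists f : A -> K, injective f) /\ ~ (exists g : K -> A, injective g).

Definition small_set (K : Type) {X : Type} (S : X -> Prop) : Prop :=
  small_type K {x : X | S x}.

Definition regular_card (K : Type) : Prop :=
  (exists f : nat -> K, injective f) /\
  (forall (X A : Type) (F : A -> X -> Prop),
      small_type K A -> (forall a, small_set K (F a)) ->
      small_set K (fun x => exists a, F a x)).

Definition is_lub {L : Type} (le : L -> L -> Prop) (S : L -> Prop) (x : L) : Prop :=
  (forall s, S s -> le s x) /\ (forall u, (forall s, S s -> le s u) -> le x u).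

Record kframe (K : Type) (L : Type) := KFrame {
  le : L -> L -> Prop;
  meet : L -> L -> L;
  top : L;
  bot : L;
  le_refl : forall a, le a a;
  le_trans : forall a b c, le a b -> le b c -> le a c;
  le_antisym : forall a b, le a b -> le b a -> a = b;
  top_max : forall a, le a top;
  bot_min : forall a, le bot a;
  meet_glb : forall a b c, le c (meet a b) <-> (le c a /\ le c b);
  small_join : forall S : L -> Prop, small_set K S -> exists x, is_lub le S x;
  distr : forall (a : L) (S : L -> Prop) (x : L), small_set K S -> is_lub le S x ->
            is_lub le (fun y => exists s, S s /\ y = meet a s) (meet a x)
}.

Arguments le {K L} _ _ _.
Arguments meet {K L} _ _ _.
Arguments top {K L} _.
Arguments bot {K L} _.

Definition kideal {K L : Type} (F : kframe K L) (I : L -> Prop) : Prop :=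
  (forall a b, le F a b -> I b -> I a) /\
  (forall S : L -> Prop, small_set K S -> (forall s, S s -> I s) ->
      exists u, I u /\ forall s, S s -> le F s u).

(** Congruences: equivalence relations that are sub-kappa-frames of L x L
    (order, meets, top, bottom and small joins in L x L are componentwise). *)
Definition congruence {K L : Type} (F : kframe K L) (C : L -> L -> Prop) : Prop :=
  (forall a, C a a) /\
  (forall a b, C a b -> C b a) /\
  (forall a b c, C a b -> C b c -> C a c) /\
  C (top F) (top F) /\ C (bot F) (bot F) /\
  (forall a b c d, C a b -> C c d -> C (meet F a c) (meet F b d)) /\
  (forall (S : L * L -> Prop) (x y : L),
      small_set K S -> (forall p, S p -> C (fst p) (snd p)) ->
      is_lub (le F) (fun a => exists p, S p /\ a = fst p) x ->
      is_lub (le F) (fun b => exists p, S p /\ b = snd p) y ->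
      C x y).

Definition subrel {L : Type} (C D : L -> L -> Prop) : Prop :=
  forall a b, C a b -> D a b.

Definition partial_rel {K L : Type} (F : kframe K L) (I : L -> Prop) : L -> L -> Prop :=
  fun a b => forall x, I (meet F a x) <-> I (meet F b x).

Definition is_cong_meet {K L : Type} (F : kframe K L)
  (P : (L -> L -> Prop) -> Prop) (C : L -> L -> Prop) : Prop :=
  congruence F C /\
  (forall D, P D -> subrel C D) /\
  (forall E, congruence F E -> (forall D, P D -> subrel E D) -> subrel E C).

From Stdlib Require Import ClassicalEpsilon ProofIrrelevance.

(* For a congruence C and an element c, the elements x with x /\ c ≡ x (mod C)
   form a kappa-ideal whose clear congruence contains C. If every clear
   congruence above C relates a and b, then testing with the ideals attached to
   a and to b (at x = top) gives a /\ b ≡ b and a /\ b ≡ a, hence a ≡ b.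
   Conversely each clear congruence is a congruence: compatibility with small
   joins is the frame distributive law combined with the fact that a
   kappa-ideal contains the join of any small subset of it. *)

Lemma small_set_image (K X Y : Type) (f : X -> Y) (S : X -> Prop) :
  small_set K S -> small_set K (fun y => exists x, S x /\ y = f x).
Proof.
  intros [[i i_inj] K_not_below].
  set (T := fun y => exists x, S x /\ y = f x).
  assert (pick : forall y : {y | T y}, {x | S x /\ proj1_sig y = f x}).
  { intros [y hy]. apply constructive_indefinite_description. exact hy. }
  set (preimage := fun y : {y | T y} =>
                    exist S (proj1_sig (pick y)) (proj1 (proj2_sig (pick y)))).
  assert (preimage_inj : injective preimage).
  { intros y1 y2 e. apply (f_equal (@proj1_sig _ _)) in e. unfold preimage in e; simpl in e.
    destruct (pick y1) as [x1 [s1 q1]], (pick y2) as [x2 [s2 q2]]; simpl in e; subst x2.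
    apply eq_sig_hprop; [intros; apply proof_irrelevance | congruence]. }
  split.
  - exists (fun y => i (preimage y)). intros a b e. apply preimage_inj, i_inj, e.
  - intros [g g_inj]. apply K_not_below. exists (fun k => preimage (g k)).
    intros a b e. apply g_inj, preimage_inj, e.
Qed.

Arguments small_set_image {K X Y} f {S} _.

Lemma is_lub_ext {L : Type} (le : L -> L -> Prop) (A B : L -> Prop) (x : L) :
  (forall s, A s <-> B s) -> is_lub le A x -> is_lub le B x.
Proof.
  intros eqAB [ub least]. split.
  - intros s hs. apply ub, eqAB, hs.
  - intros u hu. apply least. intros s hs. apply hu, eqAB, hs.
Qed.

Section FrameMeet.
Variables (K L : Type) (F : kframe K L).

Lemma meet_lel a b : le F (meet F a b) a.
Proof. apply (meet_glb F a b (meet F a b)), le_refl. Qed.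

Lemma meet_ler a b : le F (meet F a b) b.
Proof. apply (meet_glb F a b (meet F a b)), le_refl. Qed.

Lemma meetC a b : meet F a b = meet F b a.
Proof. apply (le_antisym F); apply (meet_glb F); auto using meet_lel, meet_ler. Qed.

Lemma meetA a b c : meet F (meet F a b) c = meet F a (meet F b c).
Proof.
  apply (le_antisym F); apply (meet_glb F); split.
  - eapply (le_trans F); apply meet_lel.
  - apply (meet_glb F); split; [eapply (le_trans F); [apply meet_lel | apply meet_ler] | apply meet_ler].
  - apply (meet_glb F); split; [apply meet_lel | eapply (le_trans F); [apply meet_ler | apply meet_lel]].
  - eapply (le_trans F); apply meet_ler.
Qed.

Lemma meet_idPl a b : le F a b -> meet F a b = a.
Proof. intro hab. apply (le_antisym F); [apply meet_lel | apply (meet_glb F); auto using le_refl]. Qed.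

Lemma meetxx a : meet F a a = a.
Proof. apply meet_idPl, le_refl. Qed.

Lemma meetxT a : meet F a (top F) = a.
Proof. apply meet_idPl, top_max. Qed.

Lemma meetACA a b c : meet F a (meet F b c) = meet F b (meet F a c).
Proof. rewrite <- !meetA, (meetC a b). reflexivity. Qed.

End FrameMeet.

Arguments meet_lel {K L} F a b. Arguments meet_ler {K L} F a b.
Arguments meetC {K L} F a b. Arguments meetA {K L} F a b c.
Arguments meet_idPl {K L} F {a b} _. Arguments meetxx {K L} F a.
Arguments meetxT {K L} F a. Arguments meetACA {K L} F a b c.

Section ClearCongruence.
Variables (K L : Type) (F : kframe K L) (I : L -> Prop).
Hypothesis I_kideal : kideal F I.

Lemma partial_rel_meet a b c d :
  partial_rel F I a b -> partial_rel F I c d ->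
  partial_rel F I (meet F a c) (meet F b d).
Proof.
  intros hab hcd x. rewrite !meetA.
  transitivity (I (meet F b (meet F c x))); [apply hab|].
  rewrite !(meetACA F b). apply hcd.
Qed.

Lemma partial_rel_join_half (S : L * L -> Prop) (f g : L * L -> L) x y :
  small_set K S ->
  (forall p, S p -> forall z, I (meet F (f p) z) -> I (meet F (g p) z)) ->
  is_lub (le F) (fun a => exists p, S p /\ a = f p) x ->
  is_lub (le F) (fun b => exists p, S p /\ b = g p) y ->
  forall z, I (meet F x z) -> I (meet F y z).
Proof.
  destruct I_kideal as [I_down I_up].
  intros S_small hfg hx hy z hxz.
  pose proof (small_set_image g S_small) as gS_small.
  pose proof (distr F z gS_small hy) as z_distr.
  destruct (I_up _ (small_set_image (meet F z) gS_small)) as [u [Iu u_ub]].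
  - intros w [s [[p [Sp ->]] ->]]. rewrite meetC. apply (hfg p Sp).
    apply (I_down _ (meet F x z)); [apply (meet_glb F); split; [|apply meet_ler] | exact hxz].
    eapply (le_trans F); [apply meet_lel | apply (proj1 hx); eauto].
  - rewrite meetC. apply (I_down _ _ (proj2 z_distr u u_ub) Iu).
Qed.

Lemma partial_rel_congruence : congruence F (partial_rel F I).
Proof.
  unfold congruence, partial_rel.
  split; [|split; [|split; [|split; [|split; [|split]]]]].
  - tauto.
  - intros a b h x. specialize (h x). tauto.
  - intros a b c h1 h2 x. specialize (h1 x); specialize (h2 x). tauto.
  - tauto.
  - tauto.
  - apply partial_rel_meet.
  - intros S x y S_small hS hx hy z; split.
    + apply (partial_rel_join_half S fst snd); auto. intros p hp z'. apply hS, hp.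
    + apply (partial_rel_join_half S snd fst); auto. intros p hp z'. apply hS, hp.
Qed.

End ClearCongruence.

Arguments partial_rel_congruence {K L F I} _.

Section CongBelow.
Variables (K L : Type) (F : kframe K L) (C : L -> L -> Prop).
Hypothesis C_cong : congruence F C.

Definition cong_below (c : L) : L -> Prop := fun x => C (meet F x c) x.

Lemma cong_below_kideal c : kideal F (cong_below c).
Proof.
  destruct C_cong as [Crefl [_ [_ [_ [_ [Cmeet Cjoin]]]]]].
  unfold cong_below; split.
  - intros y x yx hx. rewrite <- (meet_idPl F yx) at 1. rewrite meetA.
    pose proof (Cmeet y y _ _ (Crefl y) hx) as h. rewrite (meet_idPl F yx) in h. exact h.
  - intros S S_small hS. destruct (small_join F S_small) as [u hu].
    exists u; split; [|apply hu].
    apply (Cjoin (fun p => exists s, S s /\ p = (meet F s c, s))).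
    + apply (small_set_image (fun s => (meet F s c, s)) S_small).
    + intros p [s [Ss ->]]. apply hS, Ss.
    + rewrite (meetC F u c). eapply is_lub_ext; [|exact (distr F c S_small hu)].
      intro w; split.
      * intros [s [Ss ->]]. exists (meet F s c, s). split; eauto. apply meetC.
      * intros [p [[s [Ss ->]] ->]]. exists s. split; auto. apply meetC.
    + eapply is_lub_ext; [|exact hu]. intro w; split.
      * intro Sw. exists (meet F w c, w). eauto.
      * intros [p [[s [Ss ->]] ->]]. exact Ss.
Qed.

Lemma cong_sub_partial_below c : subrel C (partial_rel F (cong_below c)).
Proof.
  destruct C_cong as [Crefl [Csym [Ctrans [_ [_ [Cmeet _]]]]]].
  intros x y hxy z. unfold cong_below.
  pose proof (Cmeet _ _ _ _ (Cmeet _ _ _ _ hxy (Crefl z)) (Crefl c)) as hc.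
  split; intro h; eauto.
Qed.

Lemma cong_of_partial_below a b :
  partial_rel F (cong_below a) a b -> partial_rel F (cong_below b) a b -> C a b.
Proof.
  destruct C_cong as [Crefl [Csym [Ctrans _]]].
  intros ha hb. specialize (ha (top F)); specialize (hb (top F)).
  rewrite !meetxT in ha, hb. unfold cong_below in ha, hb.
  assert (hba : C (meet F b a) b) by (apply ha; rewrite meetxx; auto).
  assert (hab : C (meet F a b) a) by (apply hb; rewrite meetxx; auto).
  rewrite meetC in hba. eauto.
Qed.

End CongBelow.

Arguments cong_below {K L} F C c x.
Arguments cong_below_kideal {K L F C} _ c.
Arguments cong_sub_partial_below {K L F C} _ c.
Arguments cong_of_partial_below {K L F C} _ a b.

Theorem mainTheorem10 (K : Type) (hK : regular_card K) (L : Type) (F : kframe K L)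
  (C : L -> L -> Prop) (hC : congruence F C) :
  (forall I, kideal F I -> congruence F (partial_rel F I)) /\
  is_cong_meet F
    (fun D => exists I, kideal F I /\ D = partial_rel F I /\ subrel C (partial_rel F I))
    C.
Proof.
  split; [intros I hI; exact (partial_rel_congruence hI)|].
  split; [exact hC|]. split.
  - intros D [I [_ [-> hCI]]]. exact hCI.
  - intros E _ hE a b hab.
    assert (clear_below : forall c, partial_rel F (cong_below F C c) a b).
    { intro c. apply (hE _ (ex_intro _ (cong_below F C c)
        (conj (cong_below_kideal hC c) (conj eq_refl (cong_sub_partial_below hC c))))), hab. }
    apply (cong_of_partial_below hC); apply clear_below.
Qed.
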